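(* Let $K$ be a class of $\Lambda^-$-structures closed under ultraproducts and direct products, let $n\in\mathbb{N}$ and $\mathcal{A}=\mathcal{A}(K,n)$. Then the class of all lattices isomorphic to some $A|L$ with $A\in\mathcal{A}$ is a quasivariety of lattices.
   Context: Fix a first-order (possibly multi-sorted) language $\Lambda^-$ having a designated sort $S$, and let $K$ be a class of $\Lambda^-$-structures. Let $\Lambda$ be the expansion of $\Lambda^-$ by a new sort $L$, binary operations $\cdot$ and $+$ on $L$, and a relation symbol $\rho\subseteq S\times S\times L$; $\rho$ is the only symbol relating sort $L$ to other sorts. For $n\in\mathbb{N}$, $\mathcal{A}(K,n)$ denotes the class of all $\Lambda$-structures $A$ such that: the reduct $A^-$ (obtained by removing sort $L$ and $\rho$) lies in $K$; $(L,\cdot,+)$ is a lattice; for each $a\in L$, $\varepsilon(a):=\{(x,y)\in S\times S: \rho(x,y,a)\}$ is an equivalence relation on $S$; $a\mapsto\varepsilon(a)$ is injective; $\varepsilon(a\cdot b)=\varepsilon(a)\cap\varepsilon(b)$ for all $a,b\in L$; and $\varepsilon(a+b)=\varepsilon(a)\bowtie_n\varepsilon(b)$ for all $a,b\in L$, where $\alpha\bowtie_n\beta=\alpha\circ\beta\circ\alpha\circ\cdots$ denotes the relational product with $n$ factors alternating between $\alpha$ and $\beta$. For $A\in\mathcal{A}$, $A|L$ denotes the lattice $(L,\cdot,+)$ of $A$. A quasivariety is a class of structures axiomatizable by quasi-identities (equivalently, containing the trivial structure and closed under isomorphic copies, substructures, direct products and ultraproducts). *)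

From mathcomp Require Import ssreflect ssrfun ssrbool eqtype ssrnat fintype.
Set Implicit Arguments.
Unset Strict Implicit.
Unset Printing Implicit Defensive.

Record signature := Signature {
  sort : Type;
  fsym : Type;
  rsym : Type;
  farity : fsym -> nat;
  fsort : forall f : fsym, 'I_(farity f) -> sort;
  fres : fsym -> sort;
  rarity : rsym -> nat;
  rsort : forall r : rsym, 'I_(rarity r) -> sort }.

Record structure (Sg : signature) := mkStructure {
  car : sort Sg -> Type;
  fn : forall f : fsym Sg, (forall k : 'I_(farity f), car (fsort k)) -> car (fres f);
  rel : forall r : rsym Sg, (forall k : 'I_(rarity r), car (rsort k)) -> Prop }.

Arguments car {Sg} _ _.
Arguments fn {Sg} _ _ _.
Arguments rel {Sg} _ _ _.

Definition iso (Sg : signature) (A B : structure Sg) : Prop :=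
  exists h : forall s, car A s -> car B s,
    [/\ (forall s, bijective (h s)),
        (forall f x, h _ (fn A f x) = fn B f (fun k => h _ (x k)))
      & (forall r x, rel A r x <-> rel B r (fun k => h _ (x k)))].

Definition prod_struct (Sg : signature) (I : Type) (A : I -> structure Sg)
  : structure Sg :=
  @mkStructure Sg (fun s => forall i, car (A i) s)
    (fun f x i => fn (A i) f (fun k => x k i))
    (fun r x => forall i, rel (A i) r (fun k => x k i)).

Definition ultrafilter (I : Type) (U : (I -> Prop) -> Prop) : Prop :=
  [/\ U (fun _ => True),
      ~ U (fun _ => False),
      (forall X Y : I -> Prop, (forall i, X i -> Y i) -> U X -> U Y),
      (forall X Y : I -> Prop, U X -> U Y -> U (fun i => X i /\ Y i))
    & (forall X : I -> Prop, U X \/ U (fun i => ~ X i))].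

(** B is (an isomorphic copy of) the ultraproduct of the family A modulo U:
    there is a surjection pi from the direct product onto B whose kernel is
    U-almost-everywhere equality, commuting with the operations, and such that
    a relation holds in B iff it holds U-almost everywhere (this is exactly
    the quotient structure  prod A / U, described up to isomorphism). *)
Definition is_ultraproduct (Sg : signature) (I : Type) (A : I -> structure Sg)
  (U : (I -> Prop) -> Prop) (B : structure Sg) : Prop :=
  exists pi : forall s, (forall i, car (A i) s) -> car B s,
    [/\ (forall s (b : car B s), exists x, pi s x = b),
        (forall s (x y : forall i, car (A i) s),
            pi s x = pi s y <-> U (fun i => x i = y i)),
        (forall f (x : forall k : 'I_(farity f), forall i, car (A i) (fsort k)),
            pi _ (fun i => fn (A i) f (fun k => x k i))
            = fn B f (fun k => pi _ (x k)))
      & (forall r (x : forall k : 'I_(rarity r), forall i, car (A i) (rsort k)),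
            rel B r (fun k => pi _ (x k))
            <-> U (fun i => rel (A i) r (fun k => x k i)))].

Definition sub_closed (Sg : signature) (A : structure Sg)
  (P : forall s, car A s -> Prop) : Prop :=
  forall f (x : forall k : 'I_(farity f), car A (fsort k)),
    (forall k, P _ (x k)) -> P _ (fn A f x).

Definition substructure (Sg : signature) (A : structure Sg)
  (P : forall s, car A s -> Prop) (hP : sub_closed P) : structure Sg :=
  @mkStructure Sg (fun s => {a : car A s | P s a})
    (fun f x => exist (P (fres f)) (fn A f (fun k => sval (x k)))
                      (hP f _ (fun k => svalP (x k))))
    (fun r x => rel A r (fun k => sval (x k))).

Definition trivial_struct (Sg : signature) (A : structure Sg) : Prop :=
  (forall s, exists a : car A s, forall b, b = a) /\ (forall r x, rel A r x).

Definition closed_under_products (Sg : signature) (Q : structure Sg -> Prop) :=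
  forall (I : Type) (A : I -> structure Sg),
    (forall i, Q (A i)) -> Q (prod_struct A).

Definition closed_under_ultraproducts (Sg : signature)
  (Q : structure Sg -> Prop) :=
  forall (I : Type) (A : I -> structure Sg) (U : (I -> Prop) -> Prop)
         (B : structure Sg),
    ultrafilter U -> (forall i, Q (A i)) -> is_ultraproduct A U B -> Q B.

Definition quasivariety (Sg : signature) (Q : structure Sg -> Prop) : Prop :=
  [/\ (exists A, Q A /\ trivial_struct A),
      (forall A B, Q A -> iso A B -> Q B),
      (forall A (P : forall s, car A s -> Prop) (hP : sub_closed P),
          Q A -> Q (substructure hP)),
      closed_under_products Q
    & closed_under_ultraproducts Q].

Definition lat_sig : signature :=
  {| sort := unit; fsym := bool; rsym := Empty_set;
     farity := fun _ => 2; fsort := fun _ _ => tt; fres := fun _ => tt;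
     rarity := fun e => match e with end;
     rsort := fun e => match e with end |}.

Definition ord_1_2 : 'I_2 := Ordinal (isT : 1 < 2).

(* fsym true = meet (.), fsym false = join (+) *)
Definition lmeet (A : structure lat_sig) (x y : car A tt) : car A tt :=
  fn A true (fun k : 'I_2 => if val k == 0 then x else y).
Definition ljoin (A : structure lat_sig) (x y : car A tt) : car A tt :=
  fn A false (fun k : 'I_2 => if val k == 0 then x else y).

Definition is_lattice (A : structure lat_sig) : Prop :=
  forall x y z : car A tt,
    lmeet x y = lmeet y x /\ ljoin x y = ljoin y x /\
    lmeet x (lmeet y z) = lmeet (lmeet x y) z /\
    ljoin x (ljoin y z) = ljoin (ljoin x y) z /\
    lmeet x (ljoin x y) = x /\
    ljoin x (lmeet x y) = x.

Definition lattice_quasivariety (Q : structure lat_sig -> Prop) : Prop :=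
  (forall A, Q A -> is_lattice A) /\ quasivariety Q.

(** A Lambda-structure: a Lambda^- -structure (its reduct A^-), a new sort L
    with binary operations . and +, and a relation rho on S x S x L. *)
Record lam_struct (Sg : signature) (S : sort Sg) := mkLam {
  red : structure Sg;
  Lcar : Type;
  Lmul : Lcar -> Lcar -> Lcar;
  Ladd : Lcar -> Lcar -> Lcar;
  rho : car red S -> car red S -> Lcar -> Prop }.

Arguments red {Sg S} _.
Arguments Lcar {Sg S} _.
Arguments Lmul {Sg S} _ _ _.
Arguments Ladd {Sg S} _ _ _.
Arguments rho {Sg S} _ _ _ _.

Definition lat_of (Sg : signature) (S : sort Sg) (A : lam_struct S)
  : structure lat_sig :=
  @mkStructure lat_sig (fun _ => Lcar A)
    (fun f x => if f then Lmul A (x ord0) (x ord_1_2)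
                else Ladd A (x ord0) (x ord_1_2))
    (fun e => match e with end).

Definition eps (Sg : signature) (S : sort Sg) (A : lam_struct S) (a : Lcar A)
  : car (red A) S -> car (red A) S -> Prop :=
  fun x y => rho A x y a.
Arguments eps {Sg S} _ _ _ _.

Fixpoint bowtie (T : Type) (n : nat) (al be : T -> T -> Prop) : T -> T -> Prop :=
  match n with
  | 0 => fun x y => x = y
  | m.+1 => fun x z => exists y, al x y /\ bowtie m be al y z
  end.

Definition equivalence_rel (T : Type) (R : T -> T -> Prop) : Prop :=
  [/\ forall x, R x x, forall x y, R x y -> R y x
    & forall x y z, R x y -> R y z -> R x z].

Definition in_A (Sg : signature) (S : sort Sg) (K : structure Sg -> Prop)
  (n : nat) (A : lam_struct S) : Prop :=
  K (red A) /\
  is_lattice (lat_of A) /\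
  (forall a, equivalence_rel (eps A a)) /\
  (forall a b, (forall x y, eps A a x y <-> eps A b x y) -> a = b) /\
  (forall a b x y, eps A (Lmul A a b) x y <-> eps A a x y /\ eps A b x y) /\
  (forall a b x y,
      eps A (Ladd A a b) x y <-> bowtie n (eps A a) (eps A b) x y).

From Pilot Require Import Defs.
From mathcomp Require Import ssreflect ssrfun ssrbool eqtype ssrnat fintype.
From Stdlib Require Import Classical ClassicalEpsilon FunctionalExtensionality
  ProofIrrelevance PropExtensionality.
Set Implicit Arguments.
Unset Strict Implicit.
Unset Printing Implicit Defensive.

(** A lattice belongs to the class exactly when it is [representable]: it
    admits an injective map [a |-> e a] into equivalence relations on the
    S-sort of some structure of [K] turning meets into intersections and
    joins into n-fold relational products.  Representations pull back along
    lattice embeddings (substructures and isomorphisms), multiply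
    coordinatewise over direct products, and pass to ultraproducts by Łoś's
    argument, since the join condition is an existential statement about
    finitely many points.  Injectivity of a coordinatewise representation
    needs points in every factor; a structure with an empty S-sort represents
    at most a one-element lattice and can be replaced by the one-point empty
    product, which lies in [K] because [K] is closed under products. *)

Lemma I2_eta (T : Type) (x : 'I_2 -> T) :
  (fun k : 'I_2 => if val k == 0 then x ord0 else x ord_1_2) = x.
Proof.
by apply: functional_extensionality => -[[|[|m]] lt_k] //=; congr x; exact: val_inj.
Qed.

Definition lat_morph (M N : structure lat_sig) (h : car M tt -> car N tt) :=
  forall f (x : 'I_2 -> car M tt), h (fn M f x) = fn N f (fun k => h (x k)).

Section LatticeMorphisms.

Variables (M N : structure lat_sig) (h : car M tt -> car N tt).
Hypothesis h_morph : lat_morph h.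

Lemma lat_morphM x y : h (lmeet x y) = lmeet (h x) (h y).
Proof.
rewrite /lmeet h_morph; congr fn.
by apply: functional_extensionality_dep => k; case: ifP.
Qed.

Lemma lat_morphJ x y : h (ljoin x y) = ljoin (h x) (h y).
Proof.
rewrite /ljoin h_morph; congr fn.
by apply: functional_extensionality_dep => k; case: ifP.
Qed.

Lemma lat_morph_inv k : cancel h k -> cancel k h -> lat_morph k.
Proof.
move=> hK kK f x; apply: (can_inj hK); rewrite kK h_morph.
by congr fn; apply: functional_extensionality_dep => j; rewrite kK.
Qed.

Lemma is_lattice_pullback : injective h -> is_lattice N -> is_lattice M.
Proof.
move=> h_inj latN x y z; have := latN (h x) (h y) (h z).
rewrite -!(lat_morphM, lat_morphJ).
by case=> /h_inj-> [/h_inj-> [/h_inj-> [/h_inj-> [/h_inj-> /h_inj->]]]].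
Qed.

Lemma is_lattice_image :
  (forall b, exists a, h a = b) -> is_lattice M -> is_lattice N.
Proof.
move=> h_surj latM x y z.
have [a <-] := h_surj x; have [b <-] := h_surj y; have [c <-] := h_surj z.
rewrite -!(lat_morphM, lat_morphJ).
by case: (latM a b c) => -> [-> [-> [-> [-> ->]]]].
Qed.

End LatticeMorphisms.

Lemma iso_lat_morph (M N : structure lat_sig) :
  iso M N -> exists h k, [/\ @lat_morph M N h, cancel h k & cancel k h].
Proof. by case=> h [h_bij h_fn _]; have [k hK kK] := h_bij tt; exists (h tt), k. Qed.

Lemma lat_morph_iso (M N : structure lat_sig) h k :
  @lat_morph M N h -> cancel h k -> cancel k h -> iso M N.
Proof.
move=> h_morph hK kK; exists (fun s => match s with tt => h end).
by split=> [[] | f x | []] //; exists k.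
Qed.

Section LatticeProducts.

Variables (I : Type) (M : I -> structure lat_sig).

Lemma prod_proj_morph i : @lat_morph (prod_struct M) (M i) (fun z => z i).
Proof. by []. Qed.

Lemma prod_lmeet (x y : car (prod_struct M) tt) i :
  lmeet x y i = lmeet (x i) (y i).
Proof. exact (lat_morphM (prod_proj_morph i) x y). Qed.

Lemma prod_ljoin (x y : car (prod_struct M) tt) i :
  ljoin x y i = ljoin (x i) (y i).
Proof. exact (lat_morphJ (prod_proj_morph i) x y). Qed.

Lemma prod_is_lattice :
  (forall i, is_lattice (M i)) -> is_lattice (prod_struct M).
Proof.
move=> latM x y z.
by do ![split | apply: functional_extensionality_dep => i;
  rewrite !(prod_lmeet, prod_ljoin);
  case: (latM i (x i) (y i) (z i)) => [? [? [? [? [? ?]]]]]].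
Qed.

End LatticeProducts.

Lemma bowtie_prod (I : Type) (X : I -> Type) n
    (al be : forall i, X i -> X i -> Prop) (x y : forall i, X i) :
  bowtie n (fun x y => forall i, al i (x i) (y i))
           (fun x y => forall i, be i (x i) (y i)) x y
  <-> forall i, bowtie n (al i) (be i) (x i) (y i).
Proof.
elim: n al be x => [|n IHn] al be x /=.
  by split=> [-> // | xy]; apply: functional_extensionality_dep.
split=> [[z [alxz /IHn bezy]] i | bow]; first by exists (z i).
pose z i := proj1_sig (constructive_indefinite_description _ (bow i)).
have zP i : al i (x i) (z i) /\ bowtie n (be i) (al i) (z i) (y i).
  exact: proj2_sig (constructive_indefinite_description _ (bow i)).
by exists z; split=> [i | ]; [case: (zP i) | apply/IHn => i; case: (zP i)].
Qed.

Lemma bowtie_singleton (T : Type) n (al be : T -> T -> Prop) :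
  (forall x y : T, x = y) -> (forall x, al x x) -> (forall x, be x x) ->
  forall x y, bowtie n al be x y.
Proof.
move=> T_eq al_refl be_refl; elim: n al be al_refl be_refl => [|n IHn] al be
  al_refl be_refl x y //=.
by exists x; split; [exact: al_refl | exact: IHn].
Qed.

Lemma exists_update (I : Type) (X : I -> Type) (d : forall i, X i) i (u : X i) :
  exists x : forall j, X j, x i = u /\ forall j, j <> i -> x j = d j.
Proof.
exists (fun j => match excluded_middle_informative (i = j) with
                 | left e => eq_rect i X u j e | right _ => d j end).
split=> [|j ne_ji]; case: excluded_middle_informative => // e.
  by rewrite (proof_irrelevance _ e erefl).
by case: ne_ji.
Qed.

Lemma inhabited_prod (I : Type) (X : I -> Type) :
  (forall i, inhabited (X i)) -> inhabited (forall i, X i).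
Proof. by move=> X_inh; constructor=> i; exact: epsilon (X_inh i) xpredT. Qed.

Lemma surj_section (A B : Type) (f : A -> B) :
  (forall b, exists a, f a = b) -> exists g : B -> A, cancel g f.
Proof.
move=> f_surj; pose a b := constructive_indefinite_description _ (f_surj b).
by exists (fun b => proj1_sig (a b)) => b; exact: proj2_sig (a b).
Qed.

Section Ultrafilters.

Variables (I : Type) (U : (I -> Prop) -> Prop).
Hypothesis U_ultra : ultrafilter U.

Lemma U_mono (X Y : I -> Prop) : (forall i, X i -> Y i) -> U X -> U Y.
Proof. by case: U_ultra => _ _ mono _ _; exact: mono. Qed.

Lemma U_and (X Y : I -> Prop) : U X -> U Y -> U (fun i => X i /\ Y i).
Proof. by case: U_ultra => _ _ _ inter _; exact: inter. Qed.

Lemma U_all (X : I -> Prop) : (forall i, X i) -> U X.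
Proof. by case: U_ultra => top _ _ _ _ allX; apply: U_mono top. Qed.

Lemma U_em (X : I -> Prop) : U X \/ U (fun i => ~ X i).
Proof. by case: U_ultra. Qed.

Lemma U_contra (X : I -> Prop) : U X -> (forall i, ~ X i) -> False.
Proof. by case: U_ultra => _ bot _ _ _ UX nX; apply/bot/(U_mono _ UX). Qed.

Lemma U_andE (X Y : I -> Prop) : U (fun i => X i /\ Y i) <-> U X /\ U Y.
Proof.
split=> [UXY | [UX UY]]; last exact: U_and.
by split; apply: U_mono UXY => i [].
Qed.

Lemma U_iff (X Y : I -> Prop) : (forall i, X i <-> Y i) -> (U X <-> U Y).
Proof. by move=> XY; split; apply: U_mono => i /XY. Qed.

Lemma U_iff_on (Z X Y : I -> Prop) :
  U Z -> (forall i, Z i -> (X i <-> Y i)) -> (U X <-> U Y).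
Proof.
move=> UZ XY.
by split=> UXY; apply: U_mono (U_and UZ UXY) => i [/XY XYi /XYi].
Qed.

Lemma U_iff_contra (X Y : I -> Prop) :
  (U X <-> U Y) -> ~ U (fun i => ~ (X i <-> Y i)).
Proof.
move=> UXY UnXY; case: (U_em X) => [UX | UnX].
  by apply: (U_contra (U_and UX (U_and (proj1 UXY UX) UnXY))) => i [? [? []]].
have UY : U Y by apply: U_mono (U_and UnX UnXY) => i [nX nXY]; tauto.
by apply: (U_contra (U_and UnX (proj2 UXY UY))) => i [].
Qed.

Lemma U_exists (X : I -> Type) (P : forall i, X i -> Prop) :
  (forall i, inhabited (X i)) -> U (fun i => exists z, P i z) ->
  exists z : forall i, X i, U (fun i => P i (z i)).
Proof.
move=> X_inh UP; exists (fun i => epsilon (X_inh i) (P i)).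
by apply: U_mono UP => i; exact: epsilon_spec.
Qed.

Lemma U_forall_ord m (X : 'I_m -> I -> Prop) :
  (forall k, U (X k)) -> U (fun i => forall k, X k i).
Proof.
elim: m X => [|m IHm] X UX; first by apply: U_all => i [].
apply: U_mono (U_and (UX ord0) (IHm (fun k => X (lift ord0 k)) (fun k => UX _))).
by move=> i [X0 Xlift] k; case: (unliftP ord0 k) => [k'|] ->.
Qed.

Lemma ultra_secK (X : I -> Type) (T : Type) (pi : (forall i, X i) -> T) sec :
  (forall x y, pi x = pi y <-> U (fun i => x i = y i)) -> cancel sec pi ->
  forall x, U (fun i => sec (pi x) i = x i).
Proof. by move=> pi_ker secK x; apply/pi_ker; rewrite secK. Qed.

Section UltraproductExistence.

Variable X : I -> Type.

(* A class modulo U-almost-everywhere equality is encoded by the predicate it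
   defines, which avoids quotient types. *)
Definition ueq_class (x : forall i, X i) : (forall i, X i) -> Prop :=
  fun y => U (fun i => x i = y i).

Definition uquot := {P | exists x, P = ueq_class x}.

Definition uquot_of (x : forall i, X i) : uquot := exist _ _ (ex_intro _ x erefl).

Lemma uquot_of_surj (q : uquot) : exists x, uquot_of x = q.
Proof.
case: q => P [x eP]; exists x; subst P.
by apply: subset_eq_compat.
Qed.

Lemma uquot_of_eq x y : uquot_of x = uquot_of y <-> U (fun i => x i = y i).
Proof.
split=> [/(f_equal (fun q => sval q y)) /= eq_y | Uxy].
  by change (ueq_class x y); rewrite eq_y; exact: U_all.
apply: subset_eq_compat; apply: functional_extensionality => z.
apply: propositional_extensionality.
by split=> Uz; apply: U_mono (U_and Uxy Uz) => i [-> ->].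
Qed.

Definition urep (q : uquot) : forall i, X i :=
  proj1_sig (constructive_indefinite_description _ (uquot_of_surj q)).

Lemma urepK : cancel urep uquot_of.
Proof.
by move=> q; exact: proj2_sig (constructive_indefinite_description _ (uquot_of_surj q)).
Qed.

End UltraproductExistence.

Lemma ultraproduct_exists (Sg : signature) (A : I -> structure Sg) :
  exists B, is_ultraproduct A U B.
Proof.
pose B := @mkStructure Sg (fun s => uquot (fun i => car (A i) s))
  (fun f c => uquot_of (fun i => fn (A i) f (fun k => urep (c k) i)))
  (fun r c => U (fun i => Defs.rel (A i) r (fun k => urep (c k) i))).
have urep_of m (s : 'I_m -> sort Sg) (x : forall k, forall i, car (A i) (s k)) :
    U (fun i => forall k, urep (uquot_of (x k)) i = x k i).
  by apply: U_forall_ord => k; apply: ultra_secK; [exact: uquot_of_eq | exact: urepK].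
exists B, (fun s => @uquot_of (fun i => car (A i) s)); split=> /=.
- by move=> s; exact: uquot_of_surj.
- by move=> s; exact: uquot_of_eq.
- move=> f x; apply/uquot_of_eq; apply: U_mono (urep_of _ _ x) => i urepE.
  by congr fn; apply: functional_extensionality_dep => k; rewrite urepE.
- move=> r x; apply: (U_iff_on (urep_of _ _ x)) => i urepE.
  by have -> : (fun k => urep (uquot_of (x k)) i) = (fun k => x k i)
    by apply: functional_extensionality_dep => k; rewrite urepE.
Qed.

End Ultrafilters.

Definition empty_prod (Sg : signature) : structure Sg :=
  prod_struct (fun e : Empty_set => match e return structure Sg with end).

Lemma empty_prod_eq (Sg : signature) s (x y : car (empty_prod Sg) s) : x = y.
Proof. by apply: functional_extensionality_dep; case. Qed.

Section Representations.

Variables (Sg : signature) (S : sort Sg) (n : nat).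

Record lat_rep (R : structure Sg) (M : structure lat_sig)
    (e : car M tt -> car R S -> car R S -> Prop) : Prop := LatRep {
  rep_equiv : forall a, Defs.equivalence_rel (e a);
  rep_inj : forall a b, (forall x y, e a x y <-> e b x y) -> a = b;
  rep_meet : forall a b x y, e (lmeet a b) x y <-> e a x y /\ e b x y;
  rep_join : forall a b x y, e (ljoin a b) x y <-> bowtie n (e a) (e b) x y }.

Lemma rep_refl R M e : @lat_rep R M e -> forall a x, e a x x.
Proof. by move=> e_rep a; case: (rep_equiv e_rep a). Qed.

Lemma lat_rep_in_A K (A : lam_struct S) :
  in_A K n A -> @lat_rep (red A) (lat_of A) (eps A).
Proof. by case=> _ [_ [? [? [? ?]]]]; split. Qed.

Lemma lat_rep_pullback R (M N : structure lat_sig)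
    (e : car N tt -> car R S -> car R S -> Prop) (h : car M tt -> car N tt) :
  lat_rep e -> lat_morph h -> injective h -> lat_rep (fun a => e (h a)).
Proof.
move=> [e_equiv e_inj e_meet e_join] h_morph h_inj.
split=> [a | a b | a b x y | a b x y].
- exact: e_equiv.
- by move/e_inj/h_inj.
- by rewrite (lat_morphM h_morph).
- by rewrite (lat_morphJ h_morph).
Qed.

Lemma lat_rep_total (M : structure lat_sig) :
  (forall a b : car M tt, a = b) -> @lat_rep (empty_prod Sg) M (fun _ _ _ => True).
Proof.
move=> M_eq; split=> [a | a b _ | a b x y | a b x y] //.
by split=> // _; apply: bowtie_singleton => //; exact: empty_prod_eq.
Qed.

Section Products.

Variables (I : Type) (M : I -> structure lat_sig) (R : I -> structure Sg).
Variable e : forall i, car (M i) tt -> car (R i) S -> car (R i) S -> Prop.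
Arguments e : clear implicits.
Hypotheses (e_rep : forall i, lat_rep (e i))
  (R_inh : forall i, inhabited (car (R i) S)).

Definition prod_eps (a : car (prod_struct M) tt) (x y : car (prod_struct R) S) :=
  forall i, e i (a i) (x i) (y i).

Lemma prod_eps_inj a b : (forall x y, prod_eps a x y <-> prod_eps b x y) -> a = b.
Proof.
move=> eq_ab; apply: functional_extensionality_dep => i.
apply: (rep_inj (e_rep i)) => u v.
have [d] := inhabited_prod R_inh.
have [x [xi xE]] := exists_update d u; have [y [yi yE]] := exists_update d v.
have prod_epsE c : prod_eps c x y <-> e i (c i) u v.
  split=> [/(_ i) | euv j]; first by rewrite xi yi.
  case: (classic (j = i)) => [-> | ne_ji]; first by rewrite xi yi.
  by rewrite xE // yE //; exact: rep_refl.
by rewrite -!prod_epsE.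
Qed.

Lemma lat_rep_prod : lat_rep prod_eps.
Proof.
split=> [a | | a b x y | a b x y].
- split=> [x i | x y exy i | x y z exy eyz i]; case: (rep_equiv (e_rep i) (a i)) => //.
  + by move=> _ sym _; exact: sym.
  + by move=> _ _ trans; exact: trans (exy i) (eyz i).
- exact: prod_eps_inj.
- split=> [eab | [ea eb] i].
    by split=> i; have := eab i; rewrite prod_lmeet (rep_meet (e_rep i)) => -[].
  by rewrite prod_lmeet (rep_meet (e_rep i)).
- rewrite (bowtie_prod n (fun i => e i (a i)) (fun i => e i (b i))).
  by split=> eab i; have := eab i; rewrite prod_ljoin (rep_join (e_rep i)).
Qed.

End Products.

Section Ultraproducts.

Variables (I : Type) (U : (I -> Prop) -> Prop).
Hypothesis U_ultra : ultrafilter U.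
Variables (M : I -> structure lat_sig) (R : I -> structure Sg).
Variable e : forall i, car (M i) tt -> car (R i) S -> car (R i) S -> Prop.
Arguments e : clear implicits.
Hypotheses (e_rep : forall i, lat_rep (e i))
  (R_inh : forall i, inhabited (car (R i) S)).

Variables (B : structure lat_sig) (D : structure Sg).
Variables (piB : car (prod_struct M) tt -> car B tt)
  (secB : car B tt -> forall i, car (M i) tt).
Variables (piD : car (prod_struct R) S -> car D S)
  (secD : car D S -> forall i, car (R i) S).
Hypotheses (piB_morph : lat_morph piB) (secBK : cancel secB piB)
  (piB_ker : forall a b, piB a = piB b <-> U (fun i => a i = b i)).
Hypotheses (secDK : cancel secD piD)
  (piD_ker : forall x y, piD x = piD y <-> U (fun i => x i = y i)).

(* Evaluated on chosen representatives, which by [ultra_epsE] is harmless. *)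
Definition ultra_eps (b : car B tt) (p q : car D S) :=
  U (fun i => e i (secB b i) (secD p i) (secD q i)).

Lemma ultra_epsE a x y :
  ultra_eps (piB a) (piD x) (piD y) <-> U (fun i => e i (a i) (x i) (y i)).
Proof.
have secB_pi := ultra_secK piB_ker secBK.
have secD_pi := ultra_secK piD_ker secDK.
apply: (U_iff_on U_ultra (U_and U_ultra (secB_pi a)
  (U_and U_ultra (secD_pi x) (secD_pi y)))).
by move=> i [-> [-> ->]].
Qed.

Lemma ultra_eps_bowtie m a b x y :
  bowtie m (ultra_eps (piB a)) (ultra_eps (piB b)) (piD x) (piD y)
  <-> U (fun i => bowtie m (e i (a i)) (e i (b i)) (x i) (y i)).
Proof.
elim: m a b x => [|m IHm] a b x /=; first exact: piD_ker.
split=> [[p] | /(U_exists U_ultra R_inh) [z Uz]].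
  rewrite -[p]secDK ultra_epsE IHm => /(U_andE U_ultra) Uxy.
  by apply: (U_mono U_ultra _ Uxy) => i exy; exists (secD p i).
by exists (piD z); rewrite ultra_epsE IHm -(U_andE U_ultra).
Qed.

Lemma ultra_eps_inj b c :
  (forall p q, ultra_eps b p q <-> ultra_eps c p q) -> b = c.
Proof.
rewrite -[b]secBK -[c]secBK; move: (secB b) (secB c) => {}b {}c eq_bc.
apply/piB_ker; case: (U_em U_ultra (fun i => b i = c i)) => // Une; exfalso.
have Usep : U (fun i => exists uv : car (R i) S * car (R i) S,
    ~ (e i (b i) uv.1 uv.2 <-> e i (c i) uv.1 uv.2)).
  apply: (U_mono U_ultra _ Une) => i ne_bc; apply: NNPP => no_sep; apply/ne_bc.
  apply: (rep_inj (e_rep i)) => u v; apply: NNPP => sep_uv.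
  by apply: no_sep; exists (u, v).
have pair_inh i : inhabited (car (R i) S * car (R i) S).
  by case: (R_inh i) => d; constructor; exact: (d, d).
have [uv Uuv] := U_exists U_ultra pair_inh Usep.
apply: (U_iff_contra U_ultra _ Uuv).
by rewrite -!ultra_epsE; exact: eq_bc.
Qed.

Lemma lat_rep_ultra : lat_rep ultra_eps.
Proof.
split=> [b | | b c p q | b c p q].
- split=> [p | p q | p q r]; rewrite /ultra_eps.
  + by apply: (U_all U_ultra) => i; exact: rep_refl.
  + apply: (U_mono U_ultra) => i; case: (rep_equiv (e_rep i) (secB b i)) => _ sym _.
    exact: sym.
  + move=> Upq Uqr; apply: (U_mono U_ultra _ (U_and U_ultra Upq Uqr)) => i [].
    by case: (rep_equiv (e_rep i) (secB b i)) => _ _ trans; exact: trans.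
- exact: ultra_eps_inj.
- rewrite -[b]secBK -[c]secBK -[p]secDK -[q]secDK -(lat_morphM piB_morph).
  rewrite !ultra_epsE -(U_andE U_ultra); apply: (U_iff U_ultra) => i.
  by rewrite prod_lmeet (rep_meet (e_rep i)).
- rewrite -[b]secBK -[c]secBK -[p]secDK -[q]secDK -(lat_morphJ piB_morph).
  rewrite ultra_epsE ultra_eps_bowtie; apply: (U_iff U_ultra) => i.
  by rewrite prod_ljoin (rep_join (e_rep i)).
Qed.

End Ultraproducts.

End Representations.

Section Representability.

Variables (Sg : signature) (S : sort Sg) (K : structure Sg -> Prop) (n : nat).
Hypotheses (K_prod : closed_under_products K) (K_ultra : closed_under_ultraproducts K).

Definition representable (M : structure lat_sig) : Prop :=
  is_lattice M /\ exists R (e : car M tt -> car R S -> car R S -> Prop),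
    [/\ K R, inhabited (car R S) & lat_rep n e].

Lemma empty_prod_in_K : K (empty_prod Sg).
Proof. by apply: K_prod; case. Qed.

(* If the S-sort is empty, [eps] is constant, so the lattice has a single
   element and may be represented on the one-point empty product instead. *)
Lemma representable_lam (A : lam_struct S) : in_A K n A -> representable (lat_of A).
Proof.
move=> A_in; have [K_A [lat_A [_ [eps_inj _]]]] := A_in; split=> //.
case: (classic (inhabited (car (red A) S))) => [red_inh | red_empty].
  by exists (red A), (eps A); split=> //; exact: lat_rep_in_A A_in.
exists (empty_prod Sg), (fun _ _ _ => True); split.
- exact: empty_prod_in_K.
- by constructor; case.
- by apply: lat_rep_total => a b; apply: eps_inj => x; case: red_empty; constructor.
Qed.

Lemma representable_pullback (M N : structure lat_sig) (h : car M tt -> car N tt) :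
  lat_morph h -> injective h -> representable N -> representable M.
Proof.
move=> h_morph h_inj [lat_N [R [e [K_R R_inh e_rep]]]]; split.
  exact: is_lattice_pullback h_morph h_inj lat_N.
by exists R, (fun a => e (h a)); split=> //; exact: lat_rep_pullback.
Qed.

Lemma representable_iso M N : representable M -> iso M N -> representable N.
Proof.
move=> repM /iso_lat_morph [h [k [h_morph hK kK]]].
exact: representable_pullback (lat_morph_inv h_morph hK kK) (can_inj kK) repM.
Qed.

Lemma in_A_representable M :
  (exists A : lam_struct S, in_A K n A /\ iso (lat_of A) M) <-> representable M.
Proof.
split=> [[A [A_in A_iso]] | [lat_M [R [e [K_R _ [e_equiv e_inj e_meet e_join]]]]]].
  exact: representable_iso (representable_lam A_in) A_iso.
pose A := @mkLam _ S R _ (@lmeet M) (@ljoin M) (fun x y a => e a x y).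
exists A; split; first by do 5!(split; first by []).
apply: (@lat_morph_iso (lat_of A) M id id) => // f x.
by case: f; rewrite /= -[in RHS](I2_eta x).
Qed.

Lemma representable_trivial : exists M, representable M /\ trivial_struct M.
Proof.
pose M := @mkStructure lat_sig (fun _ => unit) (fun _ _ => tt)
  (fun r => match r with end).
exists M; split; last by split=> [s | []]; exists tt => -[].
split; first by move=> [] [] []; do !split.
exists (empty_prod Sg), (fun _ _ _ => True); split.
- exact: empty_prod_in_K.
- by constructor; case.
- by apply: lat_rep_total => -[] [].
Qed.

Lemma representable_sub (M : structure lat_sig) P (hP : @sub_closed _ M P) :
  representable M -> representable (substructure hP).
Proof.
apply: (@representable_pullback (substructure hP) M (@sval _ (P tt))) => //.
move=> [a pa] [b pb] /= eq_ab.
by subst b; rewrite (proof_irrelevance _ pa pb).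
Qed.

Lemma representable_choice I (M : I -> structure lat_sig) :
  (forall i, representable (M i)) ->
  exists (R : I -> structure Sg)
         (e : forall i, car (M i) tt -> car (R i) S -> car (R i) S -> Prop),
    forall i, [/\ K (R i), inhabited (car (R i) S) & lat_rep n (e i)].
Proof.
move=> repM; pose cR i := constructive_indefinite_description _ (proj2 (repM i)).
pose ce i := constructive_indefinite_description _ (proj2_sig (cR i)).
exists (fun i => proj1_sig (cR i)), (fun i => proj1_sig (ce i)) => i.
exact: proj2_sig (ce i).
Qed.

Lemma representable_prod : closed_under_products representable.
Proof.
move=> I M repM; have [R [e e_rep]] := representable_choice repM.
split; first by apply: prod_is_lattice => i; case: (repM i).
exists (prod_struct R), (prod_eps e); split.
- by apply: K_prod => i; case: (e_rep i).
- by apply: inhabited_prod => i; case: (e_rep i).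
- by apply: lat_rep_prod => i; case: (e_rep i).
Qed.

Lemma representable_ultra : closed_under_ultraproducts representable.
Proof.
move=> I M U B U_ultra repM [piB [piB_surj piB_ker piB_fn _]].
have [R [e e_rep]] := representable_choice repM.
have R_inh i : inhabited (car (R i) S) by case: (e_rep i).
have [D D_ultra] := ultraproduct_exists U_ultra R.
have [piD [piD_surj piD_ker _ _]] := D_ultra.
have [secB secBK] := surj_section (piB_surj tt).
have [secD secDK] := surj_section (piD_surj S).
have piB_morph : @lat_morph (prod_struct M) B (piB tt) by exact: piB_fn.
split.
  apply: is_lattice_image piB_morph (piB_surj tt) _.
  by apply: prod_is_lattice => i; case: (repM i).
exists D, (ultra_eps U e secB secD); split.
- by apply: (K_ultra U_ultra _ D_ultra) => i; case: (e_rep i).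
- by have [d] := inhabited_prod R_inh; exact: inhabits (piD S d).
- apply: (lat_rep_ultra U_ultra _ R_inh piB_morph secBK (piB_ker tt) secDK (piD_ker S)).
  by move=> i; case: (e_rep i).
Qed.

End Representability.

Theorem corollary4 (Sg : signature) (S : sort Sg) (K : structure Sg -> Prop)
  (n : nat)
  (hprod : closed_under_products K)
  (hultra : closed_under_ultraproducts K) :
  lattice_quasivariety
    (fun M : structure lat_sig =>
       exists A : lam_struct S, in_A K n A /\ iso (lat_of A) M).
Proof.
have -> : (fun M => exists A : lam_struct S, in_A K n A /\ iso (lat_of A) M)
    = representable S K n.
  apply: functional_extensionality => M; apply: propositional_extensionality.
  exact: in_A_representable.
split=> [M [] // | ]; split.
- exact: representable_trivial.
- exact: representable_iso.
- by move=> M P hP; exact: representable_sub.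
- exact: representable_prod.
- exact: representable_ultra.
Qed.
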